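(* Let $p$ be a prime and let $\Phi_p$ be the set of all $\operatorname{fpt}(R,f)$, where $R$ ranges over $F$-pure rings of characteristic $p$ and $f$ over non-zero non-units of $R$. Let $\lambda\in\Phi_p$ and $e\ge1$. Then the following three statements hold (and are equivalent): (1) $\lfloor (p^e-1)\lambda\rfloor = p^e\langle\lambda\rangle_e$; (2) $\lambda\le p^e\,\langle\lambda\rangle^e$; (3) $\lambda\ge \frac{p^e}{p^e-1}\langle\lambda\rangle_e$.
   Context: A ring $R$ of characteristic $p$ is $F$-pure if $R\subseteq R^{1/p}$ splits as a map of $R$-modules. Roots and splitting. $R^{1/p^e}$ is the ring of formal $p^e$-th roots of elements of $R$, containing $R$ via $r\mapsto(r^{p^e})^{1/p^e}$. We write $f^{a/p^e}:=(f^a)^{1/p^e}$. The inclusion $R\cdot t\subseteq R^{1/p^e}$ splits if some $R$-linear $\theta:R^{1/p^e}\to R$ has $\theta(t)=1$. $F$-pure threshold. $(R,f^\lambda)$ is $F$-pure if $R\cdot f^{\lfloor (p^e-1)\lambda\rfloor/p^e}\subseteq R^{1/p^e}$ splits for all $e\ge1$. $\operatorname{fpt}(R,f)$ is the supremum of all $\lambda\ge0$ with $(R,f^\lambda)$ $F$-pure; it lies in $[0,1]$. Truncations and tails. For $\alpha\in(0,1]$ with non-terminating base $p$ expansion $\alpha=\sum_{e\ge1}a_e/p^e$ (digits $0\le a_e\le p-1$, not all eventually zero): - the $e$-th truncation is $\langle\alpha\rangle_e:=\sum_{i=1}^e a_i/p^i$; - the $e$-th tail is $\langle\alpha\rangle^e:=\alpha-\langle\alpha\rangle_e$.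 By convention $\langle0\rangle_e=\langle0\rangle^e=0$. *)

From HB Require Import structures.
From mathcomp Require Import all_boot all_order all_algebra.
From mathcomp Require Import boolp classical_sets reals topology normedtype sequences.
From mathcomp Require Import Rstruct Rstruct_topology.
Set Implicit Arguments. Unset Strict Implicit. Unset Printing Implicit Defensive.
Import Order.TTheory GRing.Theory Num.Theory.
From Stdlib Require Rdefinitions.
Notation R := Rdefinitions.R.
Local Open Scope ring_scope.
Local Open Scope classical_set_scope.

(* Identify R^{1/q} (q = p^e) with R itself via x^{1/q} <-> x.  Then the
   R-module structure on R^{1/q} is  r . x = r^q * x, and an R-linear map
   theta : R^{1/q} -> R is an additive map with theta (r^q * x) = r * theta x.
   [splits_at A q t] : the inclusion R . t^{1/q} ⊆ R^{1/q} splits, i.e. some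
   R-linear theta : R^{1/q} -> R has theta(t^{1/q}) = 1. *)
Definition splits_at (A : comNzRingType) (q : nat) (t : A) : Prop :=
  exists theta : A -> A,
    [/\ forall x y : A, theta (x + y) = theta x + theta y,
        forall r x : A, theta (r ^+ q * x) = r * theta x
      & theta t = 1].

(* R is F-pure: R ⊆ R^{1/p} splits (the image of 1 is 1^{1/p}). *)
Definition Fpure (A : comNzRingType) (p : nat) : Prop := @splits_at A p 1.

(* (R, f^lambda) is F-pure: for every e >= 1, R . f^{floor((p^e-1)lambda)/p^e}
   ⊆ R^{1/p^e} splits.  (Only used for lambda >= 0, where truncn = floor.) *)
Definition Fpure_pair (A : comNzRingType) (p : nat) (f : A) (lam : R) : Prop :=
  forall e : nat, (0 < e)%N ->
    @splits_at A (p ^ e) (f ^+ Num.truncn (((p ^ e)%:R - 1) * lam)).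

Definition fpt (A : comNzRingType) (p : nat) (f : A) : R :=
  sup [set lam : R | 0 <= lam /\ Fpure_pair p f lam].

Definition is_unit_elt (A : comNzRingType) (f : A) : Prop := exists g : A, f * g = 1.

Definition Phi (p : nat) (lam : R) : Prop :=
  exists (A : comNzRingType) (f : A),
    [/\ p \in [pchar A], Fpure A p, f != 0, ~ is_unit_elt f & lam = fpt p f].

(* a : nat -> nat (index 0 unused) is a non-terminating base-p expansion of
   alpha:  alpha = sum_{i>=1} a_i / p^i, digits 0 <= a_i <= p-1, not all
   eventually zero. *)
Definition nonterm_expansion (p : nat) (a : nat -> nat) (alpha : R) : Prop :=
  [/\ forall i, (a i < p)%N,
      forall N : nat, exists i : nat, (N < i)%N /\ a i != 0%N
    & (fun n : nat => \sum_(1 <= i < n.+1) ((a i)%:R / (p ^ i)%:R : R))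
        @ \oo --> alpha].

(* e-th truncation  <alpha>_e = sum_{i=1}^e a_i/p^i  (0 when alpha has no
   non-terminating expansion, in particular <0>_e = 0). *)
Definition truncation (p : nat) (alpha : R) (e : nat) : R :=
  match pselect (exists a, nonterm_expansion p a alpha) with
  | left H => let a := projT1 (cid H) in
              \sum_(1 <= i < e.+1) ((a i)%:R / (p ^ i)%:R)
  | right _ => 0
  end.

Definition tail (p : nat) (alpha : R) (e : nat) : R :=
  alpha - truncation p alpha e.

(* If m/p^e < fpt(f), some (f, mu) with m/p^e < mu is F-pure; at a level p^(e+i)
   with i large the splitting exponent exceeds m p^i, and taking p^i-th roots
   (the Frobenius is additive) shows that f^m splits at level p^e.  Composing
   this splitting with itself k times splits f^(m (p^(ek) - 1)/(p^e - 1)) at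
   level p^(ek), and taking roots again shows that (f, m/(p^e - 1)) is F-pure,
   so m/(p^e - 1) <= fpt(f).  For lam = fpt(f) > 0 the truncation <lam>_e = m/p^e
   of the non-terminating expansion satisfies m/p^e < lam <= (m+1)/p^e, and the
   three conditions are rearrangements of m <= (p^e - 1) lam. *)

From HB Require Import structures.
From mathcomp Require Import all_boot all_order all_algebra.
From mathcomp Require Import boolp classical_sets reals topology normedtype sequences.
From mathcomp Require Import Rstruct Rstruct_topology.
From mathcomp Require Import ring lra zify.
Set Implicit Arguments.
Unset Strict Implicit.
Import Order.TTheory GRing.Theory Num.Theory.
Local Open Scope ring_scope.

Section Splitting.
Variable A : comNzRingType.
Implicit Types (s t u x y : A).

Lemma splits_at_one : splits_at 1 (1 : A).
Proof. by exists id; split => // r x; rewrite expr1. Qed.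

Lemma splits_at_mul q1 q2 s t :
  splits_at q1 s -> splits_at q2 t -> splits_at (q1 * q2) (t * s ^+ q2).
Proof.
move=> [th1 [th1D th1M th1s]] [th2 [th2D th2M th2t]].
exists (th1 \o th2); split => /=.
- by move=> x y; rewrite th2D th1D.
- by move=> r x; rewrite exprM th2M th1M.
- by rewrite mulrC th2M th2t mulr1 th1s.
Qed.

Lemma splits_at_expn_one q k : splits_at q (1 : A) -> splits_at (q ^ k) (1 : A).
Proof.
move=> h1; elim: k => [|k IHk]; first exact: splits_at_one.
by have := splits_at_mul IHk h1; rewrite expr1n mulr1 -expnSr.
Qed.

Lemma splits_at_factor q t u : splits_at q (t * u) -> splits_at q t.
Proof.
move=> [th [thD thM thtu]]; exists (fun x => th (u * x)); split.
- by move=> x y; rewrite mulrDr thD.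
- by move=> r x; rewrite mulrCA thM.
- by rewrite mulrC.
Qed.

Lemma splits_at_expn_le q m n (f : A) : (m <= n)%N ->
  splits_at q (f ^+ n) -> splits_at q (f ^+ m).
Proof. by move=> m_le_n; rewrite -(subnKC m_le_n) exprD => /splits_at_factor. Qed.

Lemma splits_at_unit q t x : splits_at q (t ^+ q * x) -> is_unit_elt t.
Proof. by move=> [th [_ thM thtx]]; exists (th x); rewrite -thM. Qed.

Lemma splits_at_root q r u t : {morph (fun x : A => x ^+ r) : x y / x + y} ->
  splits_at (q * r) (u ^+ r * t) -> splits_at q u.
Proof.
move=> exprDr [th [thD thM thu]]; exists (fun x => th (x ^+ r * t)); split.
- by move=> x y; rewrite exprDr mulrDl thD.
- by move=> y x; rewrite exprMn -exprM -mulrA thM.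
- exact: thu.
Qed.

Lemma splits_at_pchar_root p q j n (f : A) : p \in [pchar A] ->
  splits_at (q * p ^ j) (f ^+ n) -> splits_at q (f ^+ (n %/ p ^ j)).
Proof.
move=> p_char; rewrite {1}(divn_eq n (p ^ j)) exprD exprM.
apply: splits_at_root => x y /=; apply: exprDn_pchar.
by rewrite pnatX pnatE ?(pcharf_prime p_char) ?p_char.
Qed.

Lemma splits_at_iter q m k (f : A) : (0 < q)%N -> splits_at q (f ^+ m) ->
  exists2 n, splits_at (q ^ k) (f ^+ n) & (n * (q - 1) = m * (q ^ k - 1))%N.
Proof.
move=> q_gt0 fm; elim: k => [|k [n fn n_eq]].
  by exists 0%N; [rewrite expr0; exact: splits_at_one | rewrite expn0 subnn muln0].
exists (m + n * q)%N; first by rewrite expnSr exprD exprM; exact: splits_at_mul.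
have Qk_gt0 : (0 < q ^ k)%N by rewrite expn_gt0 q_gt0.
have -> : (q ^ k.+1 - 1 = (q ^ k - 1) * q + (q - 1))%N by rewrite expnSr; nia.
nia.
Qed.

End Splitting.

Lemma exists_inv_expn_lt (p N : nat) (d : R) : (1 < p)%N -> 0 < d ->
  exists2 i, (N <= i)%N & (p ^ i)%:R^-1 < d.
Proof.
move=> p_gt1 d_gt0; set t := Num.truncn d^-1.
exists (N + t)%N; first exact: leq_addr.
have t_le : (t.+1 <= p ^ (N + t))%N.
  exact: leq_ltn_trans (leq_addl N t) (ltn_expl _ p_gt1).
rewrite -(invrK d) ltf_pV2 ?posrE ?invr_gt0 ?ltr0n ?expn_gt0 ?(ltnW p_gt1) //.
by apply: lt_le_trans (truncnS_gt _) _; rewrite ler_nat.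
Qed.

Definition digit_sum (p : nat) (a : nat -> nat) (n : nat) : R :=
  \sum_(1 <= i < n.+1) (a i)%:R / (p ^ i)%:R.

Section DigitSums.
Variables (p : nat) (a : nat -> nat).
Hypothesis p_gt1 : (1 < p)%N.
Local Notation s := (digit_sum p a).

Lemma expn_gt0R n : 0 < (p ^ n)%:R :> R.
Proof. by rewrite ltr0n expn_gt0 ltnW. Qed.

Lemma digit_sumS n : s n.+1 = s n + (a n.+1)%:R / (p ^ n.+1)%:R.
Proof. by rewrite /digit_sum big_nat_recr. Qed.

Lemma digit_sum_numer n : exists m : nat, s n = m%:R / (p ^ n)%:R.
Proof.
elim: n => [|n [m sn]]; first by exists 0%N; rewrite /digit_sum big_geq // mul0r.
exists (p * m + a n.+1)%N; rewrite digit_sumS sn expnS natrD !natrM.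
have := expn_gt0R n; have : 0 < p%:R :> R by rewrite ltr0n ltnW.
by move=> p_gt0 pn_gt0; field; rewrite !lt0r_neq0.
Qed.

Lemma nondecreasing_digit_sum : nondecreasing_seq s.
Proof.
apply/nondecreasing_seqP => n; rewrite digit_sumS lerDl.
by rewrite divr_ge0 // ltW // expn_gt0R.
Qed.

Lemma digit_sum_jump i : a i.+1 != 0%N -> s i + (p ^ i.+1)%:R^-1 <= s i.+1.
Proof.
by move=> ai; rewrite digit_sumS lerD2l ler_pMl ?invr_gt0 ?expn_gt0R // ler1n lt0n.
Qed.

Lemma digit_sum_tail_le n k : (forall i, (a i < p)%N) ->
  s (n + k) - s n <= (p ^ n)%:R^-1 - (p ^ (n + k))%:R^-1.
Proof.
move=> a_lt; elim: k => [|k IHk]; first by rewrite addn0 !subrr.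
rewrite addnS digit_sumS expnS natrM.
have P_gt0 := expn_gt0R (n + k); set P := (p ^ (n + k))%:R in IHk P_gt0 *.
have p_gt0 : 0 < p%:R :> R by rewrite ltr0n ltnW.
have a_le : (a (n + k).+1)%:R <= p%:R - 1 :> R.
  by rewrite lerBrDr natr1 ler_nat a_lt.
have : (a (n + k).+1)%:R / (p%:R * P) <= (p%:R - 1) / (p%:R * P).
  by rewrite ler_pM2r // invr_gt0 mulr_gt0.
have -> : (p%:R - 1) / (p%:R * P) = P^-1 - (p%:R * P)^-1.
  by field; rewrite !lt0r_neq0.
lra.
Qed.

Lemma nonterm_expansion_bounds lam n : nonterm_expansion p a lam ->
  s n < lam /\ lam <= s n + (p ^ n)%:R^-1.
Proof.
move=> [a_lt a_nonterm s_cvg]; split.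
- have [i [n_lt_i ai]] := a_nonterm n.
  case: i n_lt_i ai => // i n_le_i ai.
  have : s n + (p ^ i.+1)%:R^-1 <= lam.
    apply: (cvgr_to_ge s_cvg); exists i.+1 => // k /= i_le_k.
    apply: le_trans (nondecreasing_digit_sum i_le_k).
    apply: le_trans (digit_sum_jump ai).
    by rewrite lerD2r nondecreasing_digit_sum.
  by have := expn_gt0R i.+1; rewrite -invr_gt0; lra.
- apply: (cvgr_to_le s_cvg); exists n => // k /= n_le_k.
  change (s k <= s n + (p ^ n)%:R^-1).
  have := digit_sum_tail_le n (k - n) a_lt; rewrite subnKC //.
  by have := expn_gt0R k; rewrite -invr_gt0; lra.
Qed.

End DigitSums.

Section ExpansionExists.
Variables (p : nat) (lam : R).
Hypotheses (p_gt1 : (1 < p)%N) (lam_gt0 : 0 < lam) (lam_le1 : lam <= 1).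

(* [c n / p^n] is the n-th truncation; taking [ceil - 1] instead of [floor]
   keeps it strictly below [lam], which makes the expansion non-terminating. *)
Let c n : int := Num.ceil ((p ^ n)%:R * lam) - 1.
Let digit i : nat := absz (c i - p%:Z * c i.-1)%R.

Lemma expansion_numer_bounds n : (c n)%:~R < (p ^ n)%:R * lam <= (c n)%:~R + 1.
Proof.
have /andP[lt le] := ceil_itv ((p ^ n)%:R * lam).
by rewrite /c lt /= intrB mulr1z subrK.
Qed.

Lemma expansion_numer0 : c 0 = 0.
Proof. by rewrite /c expn0 mul1r (@ceil_def _ _ 1) //= subrr lam_gt0. Qed.

Lemma expansion_digit_bounds i : 0 <= c i.+1 - p%:Z * c i < p%:Z.
Proof.
have /andP[lt_i le_i] := expansion_numer_bounds i.
have /andP[lt_Si le_Si] := expansion_numer_bounds i.+1.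
have p_gt0 : 0 < p%:R :> R by rewrite ltr0n ltnW.
rewrite expnS natrM -mulrA in lt_Si le_Si.
have lo : -1 < c i.+1 - p%:Z * c i.
  by rewrite -(ltr_int R) intrB intrM /=; nra.
have hi : c i.+1 - p%:Z * c i < p%:Z.
  by rewrite -(ltr_int R) intrB intrM /=; nra.
by apply/andP; split; lia.
Qed.

Lemma expansion_digitE i : (digit i.+1)%:R = (c i.+1)%:~R - p%:R * (c i)%:~R :> R.
Proof.
have /andP[ge0 _] := expansion_digit_bounds i.
by rewrite /digit /= -[LHS]/((absz _)%:~R) gez0_abs // intrB intrM.
Qed.

Lemma expansion_digit_lt i : (digit i < p)%N.
Proof.
case: i => [|i]; first by rewrite /digit /= expansion_numer0 mulr0 subrr ltnW.
have /andP[ge0 lt] := expansion_digit_bounds i.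
by rewrite -ltz_nat /digit /= gez0_abs.
Qed.

Lemma expansion_digit_sumE n : digit_sum p digit n = (c n)%:~R / (p ^ n)%:R.
Proof.
elim: n => [|n IHn]; first by rewrite /digit_sum big_geq // expansion_numer0 mul0r.
rewrite digit_sumS IHn expansion_digitE expnS natrM.
have := expn_gt0R p_gt1 n; have : 0 < p%:R :> R by rewrite ltr0n ltnW.
by move=> p_gt0 pn_gt0; field; rewrite !lt0r_neq0.
Qed.

Lemma expansion_digit_sum_bounds n :
  digit_sum p digit n < lam <= digit_sum p digit n + (p ^ n)%:R^-1.
Proof.
have /andP[lt le] := expansion_numer_bounds n; have pn_gt0 := expn_gt0R p_gt1 n.
rewrite expansion_digit_sumE.
have -> : (c n)%:~R / (p ^ n)%:R + (p ^ n)%:R^-1 = ((c n)%:~R + 1) / (p ^ n)%:R :> R.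
  by rewrite mulrDl mul1r.
by rewrite ltr_pdivrMr // ler_pdivlMr // mulrC lt.
Qed.

Lemma exists_nonterm_expansion : exists a, nonterm_expansion p a lam.
Proof.
exists digit; split; first exact: expansion_digit_lt.
- move=> N; apply: contrapT => nonzero_after.
  have scaled_const k : (c (N + k))%:~R = (p ^ k)%:R * (c N)%:~R :> R.
    elim: k => [|k IHk]; first by rewrite addn0 mul1r.
    have : digit (N + k).+1 = 0%N.
      apply/eqP/negP => nz; apply: nonzero_after.
      by exists (N + k).+1; split; [rewrite ltnS leq_addr | apply/negP].
    move/(congr1 (fun m => m%:R : R)).
    by rewrite expansion_digitE addnS IHk expnS natrM; lra.
  have /andP[lt_N _] := expansion_digit_sum_bounds N.
  have gap : 0 < lam - digit_sum p digit N by rewrite subr_gt0.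
  have [i N_le_i small] := exists_inv_expn_lt N p_gt1 gap.
  have /andP[_ le_i] := expansion_digit_sum_bounds i.
  suff : digit_sum p digit i = digit_sum p digit N by lra.
  rewrite !expansion_digit_sumE -(subnKC N_le_i) scaled_const expnD natrM.
  have := expn_gt0R p_gt1 N; have := expn_gt0R p_gt1 (i - N).
  by move=> ? ?; field; rewrite !lt0r_neq0.
- apply/(@cvgrPdist_lt _ R^o) => eps eps_gt0.
  have [i _ small] := exists_inv_expn_lt 0 p_gt1 eps_gt0.
  exists i => // n /= i_le_n; have /andP[lt le] := expansion_digit_sum_bounds n.
  have inv_le : (p ^ n)%:R^-1 <= (p ^ i)%:R^-1 :> R.
    by rewrite lef_pV2 ?posrE ?expn_gt0R // ler_nat leq_pexp2l // ltnW.
  rewrite ger0_norm; first by change (lam - digit_sum p digit n < eps); lra.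
  by rewrite subr_ge0 ltW.
Qed.

End ExpansionExists.

Section Threshold.
Variables (A : comNzRingType) (p : nat) (f : A).
Hypotheses (p_prime : prime p) (p_char : p \in [pchar A]) (A_Fpure : Fpure A p)
  (f_nonunit : ~ is_unit_elt f).

Let p_gt1 : (1 < p)%N := prime_gt1 p_prime.
Let admissible := [set lam : R | 0 <= lam /\ Fpure_pair p f lam]%classic.

Lemma Fpure_pair0 : Fpure_pair p f 0.
Proof. by move=> e _; rewrite mulr0 truncn0 expr0; exact: splits_at_expn_one. Qed.

Lemma Fpure_pair_le1 lam : 0 <= lam -> Fpure_pair p f lam -> lam <= 1.
Proof.
move=> lam_ge0 lam_Fpure; rewrite leNgt; apply/negP => lam_gt1.
have gap : 0 < (lam - 1) / lam by rewrite divr_gt0 // ?subr_gt0 //; lra.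
have [k k_gt0 small] := exists_inv_expn_lt 1 p_gt1 gap.
have pk_gt0 := expn_gt0R p_gt1 k.
have pk_le : (p ^ k)%:R <= ((p ^ k)%:R - 1) * lam.
  move: small; rewrite ltr_pdivlMr; last lra.
  by rewrite -(ltr_pM2l pk_gt0) mulrA mulfV ?lt0r_neq0 // mul1r; lra.
have pk_le_trunc : (p ^ k <= Num.truncn (((p ^ k)%:R - 1) * lam))%N.
  by rewrite truncn_ge_nat // mulr_ge0 // subr_ge0 ler1n expn_gt0 ltnW.
by have := lam_Fpure k k_gt0; rewrite -(subnKC pk_le_trunc) exprD => /splits_at_unit.
Qed.

Lemma has_sup_admissible : has_sup admissible.
Proof.
split; first by exists 0; split => //; exact: Fpure_pair0.
by exists 1 => lam [lam_ge0 lam_Fpure]; exact: Fpure_pair_le1.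
Qed.

Lemma fpt_ge0 : 0 <= fpt p f.
Proof.
by apply: sup_upper_bound has_sup_admissible _ _; split => //; exact: Fpure_pair0.
Qed.

Lemma fpt_le1 : fpt p f <= 1.
Proof.
apply: ge_sup; first by exists 0; split => //; exact: Fpure_pair0.
by move=> lam [lam_ge0 lam_Fpure]; exact: Fpure_pair_le1.
Qed.

Lemma splits_at_of_lt_fpt e m : m%:R / (p ^ e)%:R < fpt p f ->
  splits_at (p ^ e) (f ^+ m).
Proof.
move=> m_lt; have pe_gt0 := expn_gt0R p_gt1 e.
have gap : 0 < fpt p f - m%:R / (p ^ e)%:R by rewrite subr_gt0.
have [mu [mu_ge0 mu_Fpure] mu_gt] := sup_adherent gap has_sup_admissible.
have mu_le1 := Fpure_pair_le1 mu_ge0 mu_Fpure.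
have gap_mu : 0 < (p ^ e)%:R * mu - m%:R.
  by move: mu_gt; rewrite /fpt -/admissible subKr ltr_pdivrMr // mulrC subr_gt0.
have [i i_gt0 small] := exists_inv_expn_lt 1 p_gt1 gap_mu.
have pi_gt0 := expn_gt0R p_gt1 i.
have big : 1 < (p ^ i)%:R * ((p ^ e)%:R * mu - m%:R).
  by move: small; rewrite -(ltr_pM2l pi_gt0) mulfV ?lt0r_neq0.
have m_le_trunc : (m * p ^ i <= Num.truncn (((p ^ (e + i))%:R - 1) * mu))%N.
  rewrite truncn_ge_nat; last by rewrite mulr_ge0 // subr_ge0 ler1n expn_gt0 ltnW.
  rewrite expnD !natrM.
  have -> : ((p ^ e)%:R * (p ^ i)%:R - 1) * mu =
      (p ^ i)%:R * ((p ^ e)%:R * mu - m%:R) + m%:R * (p ^ i)%:R - mu :> R by ring.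
  lra.
have := mu_Fpure (e + i) (ltn_addl _ i_gt0).
move=> /(splits_at_expn_le m_le_trunc); rewrite expnD.
by move=> /(splits_at_pchar_root p_char); rewrite mulnK // expn_gt0 ltnW.
Qed.

Lemma fpt_ge_of_splits e m : (0 < e)%N -> splits_at (p ^ e) (f ^+ m) ->
  m%:R / ((p ^ e)%:R - 1) <= fpt p f.
Proof.
move=> e_gt0 fm; set nu := m%:R / ((p ^ e)%:R - 1).
have pe_gt1 : 1 < (p ^ e)%:R :> R by rewrite ltr1n -(expn0 p) ltn_exp2l.
have nu_ge0 : 0 <= nu by rewrite divr_ge0 // subr_ge0 ltW.
apply: sup_upper_bound has_sup_admissible _ _; split => // k k_gt0.
have pe_gt0 : (0 < p ^ e)%N by rewrite expn_gt0 ltnW.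
have [n fn n_eq] := splits_at_iter k pe_gt0 fm.
set j := (e * k - k)%N.
have pek_split : ((p ^ e) ^ k = p ^ k * p ^ j)%N.
  by rewrite -expnM -expnD subnKC // leq_pmull.
move: fn; rewrite pek_split => /(splits_at_pchar_root p_char).
apply: splits_at_expn_le; rewrite leq_divRL; last by rewrite expn_gt0 ltnW.
rewrite -(ler_nat R) natrM.
have n_eqR : n%:R = (((p ^ e) ^ k)%:R - 1) * nu :> R.
  move/(congr1 (fun x => x%:R : R)): n_eq.
  rewrite !natrM !natrB ?expn_gt0 ?pe_gt0 ?(ltnW p_gt1) // => n_eq.
  by rewrite /nu mulrA [_ * m%:R]mulrC -n_eq mulfK // subr_eq0 gt_eqF.
have t_le : (Num.truncn (((p ^ k)%:R - 1) * nu))%:R <= ((p ^ k)%:R - 1) * nu.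
  by rewrite truncn_le mulr_ge0 // subr_ge0 ler1n expn_gt0 ltnW.
have pj_ge1 : 1 <= (p ^ j)%:R :> R by rewrite ler1n expn_gt0 ltnW.
rewrite n_eqR pek_split natrM.
apply: le_trans (ler_wpM2r _ t_le) _; first lra.
nra.
Qed.

End Threshold.

Lemma truncation_conditions (q m : nat) (lam : R) : (1 < q)%N ->
  m%:R / q%:R < lam -> lam <= m%:R / q%:R + q%:R^-1 -> m%:R / (q%:R - 1) <= lam ->
  [/\ (Num.floor ((q%:R - 1) * lam))%:~R = q%:R * (m%:R / q%:R) :> R,
      lam <= q%:R * (lam - m%:R / q%:R)
    & q%:R / (q%:R - 1) * (m%:R / q%:R) <= lam].
Proof.
move=> q_gt1 lt le ge; have q_gt1R : 1 < q%:R :> R by rewrite ltr1n.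
have q_gt0 : 0 < q%:R :> R by lra.
have qm : q%:R * (m%:R / q%:R) = m%:R :> R by rewrite mulrC divfK // gt_eqF.
have -> : q%:R / (q%:R - 1) * (m%:R / q%:R) = m%:R / (q%:R - 1) :> R.
  by field; rewrite !gt_eqF // subr_gt0.
have lt' : m%:R < lam * q%:R by rewrite -ltr_pdivrMr.
have le' : lam * q%:R <= m%:R + 1 by rewrite -ler_pdivlMr // mulrDl mul1r.
have ge' : m%:R <= lam * (q%:R - 1) by rewrite -ler_pdivrMr // subr_gt0.
have lam_gt0 : 0 < lam by apply: le_lt_trans lt; rewrite divr_ge0.
rewrite qm mulrBr qm; split => //; last lra.
rewrite (floor_def (m := Posz m)); first by rewrite -pmulrn.
by rewrite intrD mulr1z -pmulrn; apply/andP; split; nra.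
Qed.

Theorem mainTheorem5 (p : nat) (lam : R) (e : nat) :
  prime p -> Phi p lam -> (0 < e)%N ->
  [/\ (Num.floor (((p ^ e)%:R - 1) * lam))%:~R = (p ^ e)%:R * truncation p lam e,
      lam <= (p ^ e)%:R * tail p lam e
    & (p ^ e)%:R / ((p ^ e)%:R - 1) * truncation p lam e <= lam].
Proof.
move=> p_prime [A [f [p_char A_Fpure _ f_nonunit ->]]] e_gt0.
have p_gt1 := prime_gt1 p_prime.
rewrite /tail /truncation; case: pselect => [expansion | no_expansion]; last first.
  suff -> : fpt p f = 0 by rewrite !mulr0 floor0 subrr mulr0.
  apply/eqP; rewrite eq_le fpt_ge0 // andbT leNgt; apply/negP => fpt_gt0.
  apply: no_expansion; apply: exists_nonterm_expansion p_gt1 fpt_gt0 _.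
  exact: fpt_le1.
case: (cid expansion) => a a_expansion /=.
have [m sm] := digit_sum_numer a p_gt1 e.
have [lt le] := nonterm_expansion_bounds p_gt1 e a_expansion.
rewrite -/(digit_sum p a e) sm in lt le *.
apply: truncation_conditions => //; first by rewrite -(expn0 p) ltn_exp2l.
exact/fpt_ge_of_splits/splits_at_of_lt_fpt.
Qed.
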